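(* Let $(d,e;m)\in\mathcal{E}$ be such that $\mu(d,e;m)(a)>\sqrt{a/2}$ for some $a\geq 1$, and let $I$ be a maximal nonempty open interval on which $\mu(d,e;m)(a)>\sqrt{a/2}$. Then there exists a unique $a_0\in I$ with $l(a_0)=l(m)$. Moreover $l(a)\geq l(a_0)$ for all $a\in I$.
   Context: Weight expansion: for real $a\geq1$, $w(a)=(w_1(a),w_2(a),\dots)$ is the nonincreasing sequence of side lengths of squares obtained by successively cutting off largest possible squares from a $1\times a$ rectangle; for rational $a=[l_0;l_1,\dots,l_N]$ it is the finite sequence $(1^{\times l_0},x_1^{\times l_1},\dots,x_N^{\times l_N})$ with $x_0=1$, $x_1=a-l_0$, $x_i=x_{i-2}-l_{i-1}x_{i-1}$, and for irrational $a$ it is infinite. Each $w_i$ is a continuous piecewise linear function of $a$. $l(a)$ denotes the length of $w(a)$ (possibly $\infty$), and $l(m)$ the number of positive entries of the vector $m$. The set $\mathcal{E}$: a Cremona transform of an integer tuple $(\delta;n_1,\dots,n_k)$ with $n_1\geq\dots\geq n_k$ is $(2\delta-n_1-n_2-n_3;\delta-n_2-n_3,\delta-n_1-n_3,\delta-n_1-n_2,n_4,\dots,n_k)$; a Cremona move is a Cremona transform followed by a permutation of the entries after the semicolon. $\mathcal{E}$ consists of $(0,0;-1)$ together with all integer tuples $(d,e;m_1,\dots,m_M)$ with $d,e\geq0$, $m_1\geq\dots\geq m_M\geq0$, satisfying $\sum m_i=2(d+e)-1$, $\sum m_i^2=2de+1$, and such that $(d+e-m_1;d-m_1,e-m_1,m_2,\dots,m_M)$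 reduces to $(0;-1,0,\dots,0)$ by repeated Cremona moves. $\mu(d,e;m)(a):=\langle m,w(a)\rangle/(d+e)=\sum_i m_iw_i(a)/(d+e)$. *)

From HB Require Import structures.
From mathcomp Require Import all_boot all_order all_algebra.
From mathcomp Require Import reals.
From Stdlib Require Import Relations.
Set Implicit Arguments. Unset Strict Implicit. Unset Printing Implicit Defensive.
Import Order.TTheory GRing.Theory Num.Theory.
Local Open Scope ring_scope.

Section Weights.
Variable R : realType.

(* State (L, S) with L >= S >= 0 : current rectangle L x S.  Cutting the
   largest square (side S) leaves an (L - S) x S rectangle, re-sorted.
   Once S = 0 the state is stationary. *)
Definition wstep (p : R * R) : R * R :=
  let: (L, s) := p in if s <= L - s then (L - s, s) else (s, L - s).

(* [w i a] = w_{i+1}(a) (0-indexed): side of the (i+1)-st square cut from the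
   1 x a rectangle; it is 0 once the expansion has terminated. *)
Definition w (i : nat) (a : R) : R := (iter i wstep (a, 1)).2.

(* l(a) = n  (the number of positive weights is exactly n) *)
Definition wlen_eq (a : R) (n : nat) : Prop := forall i, 0 < w i a <-> (i < n)%N.

(* l(b) <= l(a)  (lengths in nat \cup {oo}; weights are positive on an
   initial segment) *)
Definition wlen_le (b a : R) : Prop := forall i, 0 < w i b -> 0 < w i a.

Definition mu_cls (d e : int) (m : seq int) (a : R) : R :=
  (\sum_(i < size m) (nth 0 m i)%:~R * w i a) / (d + e)%:~R.
End Weights.

Definition lm (m : seq int) : nat := count (fun x : int => 0 < x) m.

Definition ge_int (x y : int) : bool := y <= x.

Definition cremona (t : int * seq int) : int * seq int :=
  let: (dl, n) := t in
  let n1 := nth 0 n 0 in let n2 := nth 0 n 1 in let n3 := nth 0 n 2 in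
  (2 * dl - n1 - n2 - n3,
   [:: dl - n2 - n3; dl - n1 - n3; dl - n1 - n2] ++ drop 3 n).

Definition cremona_move (t t' : int * seq int) : Prop :=
  [/\ sorted ge_int t.2, (3 <= size t.2)%N,
      t'.1 = (cremona t).1 & perm_eq (cremona t).2 t'.2].

Definition red_step (t t' : int * seq int) : Prop :=
  cremona_move t t' \/
  (t'.1 = t.1 /\ perm_eq t.2 t'.2) \/
  (t'.1 = t.1 /\ t'.2 = rcons t.2 0).

Definition reduces_to_exc (t : int * seq int) : Prop :=
  exists k : nat, clos_refl_trans _ red_step t (0, (-1) :: nseq k 0).

Definition in_calE (d e : int) (m : seq int) : Prop :=
  (d = 0 /\ e = 0 /\ m = [:: -1]) \/
  [/\ 0 <= d /\ 0 <= e, sorted ge_int m /\ all (fun x : int => 0 <= x) m,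
      \sum_(x <- m) x = 2 * (d + e) - 1,
      \sum_(x <- m) x ^+ 2 = 2 * d * e + 1 &
      reduces_to_exc (d + e - head 0 m,
                      [:: d - head 0 m, e - head 0 m & behead m])].

(* I is a nonempty interval contained in [1, +oo), open relative to the
   domain [1, +oo) of the weight expansion, on which P holds. *)
Definition good_interval (R : realType) (P : R -> Prop) (I : R -> Prop) : Prop :=
  [/\ exists x, I x,
      forall x, I x -> 1 <= x /\ P x,
      forall x y z, I x -> I y -> x <= z -> z <= y -> I z &
      forall x, I x -> exists2 eps : R, 0 < eps &
        forall y, 1 <= y -> `|y - x| < eps -> I y].

Definition maximal_good_interval (R : realType) (P : R -> Prop) (I : R -> Prop)
  : Prop :=
  good_interval P I /\
  forall J, good_interval P J -> (forall x, I x -> J x) -> forall x, J x -> I x.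

From mathcomp Require Import all_boot all_order all_algebra.
From mathcomp Require Import classical_sets reals ring lra.
From Stdlib Require Import Classical.
Import Order.TTheory GRing.Theory Num.Theory.
Local Open Scope ring_scope.

(* Write [n] for [lm m]. On a maximal interval [I], the inequality
   [sqrt (a / 2) < mu a] together with Cauchy-Schwarz against
   [sum m_i ^ 2 = 2 d e + 1] and [sum w_i(a) ^ 2 <= a] forces [w 0 .. w (n - 1)]
   to be positive. While a weight stays positive on [I], the cutting process
   makes the same choices throughout [I], so the current rectangle [(L, s)] is
   an affine function of [a] with unimodular linear part. If [w n] never
   vanished on [I], [mu] would therefore be affine on [I]; but [I] is bounded
   and avoids [1], maximality gives [mu <= sqrt (a / 2)] at both ends, and the
   concavity of [sqrt] contradicts [mu > sqrt (a / 2)] inside. The zeros of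
   [w n] in [I] are the solutions of [L = 2 s] one step earlier, a
   nondegenerate affine equation, hence unique; the last claim is the
   monotonicity of the support of the weights. *)

Section WeightExpansion.
Context {R : realType}.
Implicit Types (a b L s : R).

Definition wstate (k : nat) a : R * R := iter k (@wstep R) (a, 1).

Lemma wE k a : w k a = (wstate k a).2. Proof. by []. Qed.

Lemma wstateS k a : wstate k.+1 a = wstep (wstate k a).
Proof. by rewrite /wstate iterS. Qed.

Lemma wstep_invariant {L s} : 0 <= s <= L ->
  [/\ 0 <= (wstep (L, s)).2 <= (wstep (L, s)).1, (wstep (L, s)).2 <= s &
      (wstep (L, s)).1 * (wstep (L, s)).2 = L * s - s ^+ 2].
Proof.
case/andP=> s0 sL /=; case: ifP => [h | /negbT]; last rewrite -ltNge => h.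
all: split; [apply/andP; split | ..] => /=; lra || ring.
Qed.

Lemma wstate_invariant k a : 1 <= a ->
  [/\ 0 <= (wstate k a).2 <= (wstate k a).1, (wstate k a).2 <= 1 &
      \sum_(j < k) w j a ^+ 2 + (wstate k a).1 * (wstate k a).2 = a].
Proof.
move=> a1; elim: k => [|k [IH1 IH2 IH3]].
  by rewrite big_ord0 /= add0r mulr1; split => //; apply/andP; split; lra.
rewrite wstateS big_ord_recr /= wE.
case: (wstate k a) IH1 IH2 IH3 => L s /= IH1 IH2 IH3.
have [h1 h2 h3] := wstep_invariant IH1.
by split => //; [lra | rewrite h3; lra].
Qed.

Lemma w_ge0 k a : 1 <= a -> 0 <= w k a.
Proof. by move=> a1; have [/andP[]] := wstate_invariant k a a1. Qed.

Lemma w_le1 k a : 1 <= a -> w k a <= 1.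
Proof. by move=> a1; have [] := wstate_invariant k a a1. Qed.

Lemma sum_w2_le k a : 1 <= a -> \sum_(j < k) w j a ^+ 2 <= a.
Proof.
move=> a1; have [/andP[s0 sL] _ h] := wstate_invariant k a a1.
have := mulr_ge0 s0 (le_trans s0 sL); lra.
Qed.

Lemma w_eq0S k a : 1 <= a -> w k a = 0 -> w k.+1 a = 0.
Proof.
move=> a1; have [/andP[s0 sL] _ _] := wstate_invariant k a a1.
rewrite !wE wstateS; case: (wstate k a) s0 sL => L s /= s0 sL ->.
by case: ifP => //= /negbT; rewrite -ltNge => h; lra.
Qed.

Lemma w_eq0_leq {i j a} : 1 <= a -> (i <= j)%N -> w i a = 0 -> w j a = 0.
Proof.
move=> a1 /subnKC <-; elim: (j - i)%N => [|k IH] wi; first by rewrite addn0.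
by rewrite addnS; apply: w_eq0S => //; apply: IH.
Qed.

Lemma w_gt0_leq {i j a} : 1 <= a -> (i <= j)%N -> 0 < w j a -> 0 < w i a.
Proof.
move=> a1 ij wj; rewrite lt_neqAle w_ge0 // andbT eq_sym; apply/eqP => wi.
by move: wj; rewrite (w_eq0_leq a1 ij wi) ltxx.
Qed.

Lemma w_gt0_lt {k a} : 1 <= a -> w k a = 0 -> forall i, 0 < w i a -> (i < k)%N.
Proof.
move=> a1 wk i wi; rewrite ltnNge; apply/negP => ki.
by move: wi; rewrite (w_eq0_leq a1 ki wk) ltxx.
Qed.

Lemma w_at1 k : (0 < k)%N -> w k (1 : R) = 0.
Proof.
move=> k0; apply: (w_eq0_leq (lexx 1) k0).
by rewrite wE wstateS /= ifF /=; [lra | apply/negbTE; rewrite -ltNge; lra].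
Qed.

Lemma w1_eq0 {a} : 1 <= a -> w 1 a = 0 -> a = 1.
Proof. by move=> a1; rewrite wE wstateS /=; case: ifP => /= h; lra. Qed.

Lemma wstep2_eq0 {L s} : 0 < s -> 0 < (wstep (L, s)).2 ->
  (wstep (wstep (L, s))).2 = 0 <-> L = 2 * s.
Proof.
move=> s0 /=; case: ifP => /= [h1 | /negbT h1] h;
  case: ifP => /= [h2 | /negbT h2]; rewrite -?ltNge in h1 h2; split; lra.
Qed.

Lemma wstep_lipschitz L s L' s' c :
  `|L - L'| <= c -> `|s - s'| <= c ->
  `|(wstep (L, s)).1 - (wstep (L', s')).1| <= 2 * c /\
  `|(wstep (L, s)).2 - (wstep (L', s')).2| <= 2 * c.
Proof.
rewrite !ler_norml => /andP[h1 h2] /andP[h3 h4] /=.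
case: ifP => /= [|/negbT]; rewrite ?ltNge => ha;
case: ifP => /= [|/negbT]; rewrite ?ltNge => hb;
rewrite ?ler_norml; (split; apply/andP; split); lra.
Qed.

Lemma w_lipschitz k a b : `|w k a - w k b| <= 2 ^+ k * `|a - b|.
Proof.
suff [] : `|(wstate k a).1 - (wstate k b).1| <= 2 ^+ k * `|a - b| /\
          `|(wstate k a).2 - (wstate k b).2| <= 2 ^+ k * `|a - b| by [].
elim: k => [|k]; first by rewrite /= expr0 mul1r subrr normr0.
rewrite !wstateS exprS -mulrA.
case: (wstate k a) => L s; case: (wstate k b) => L' s' [] /=.
exact: wstep_lipschitz.
Qed.

End WeightExpansion.

Section AffinePieces.
Context {R : realType}.
Implicit Types (I : R -> Prop) (f : R -> R).

Definition convex_pred I := forall x y z, I x -> I y -> x <= z -> z <= y -> I z.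

Definition affine_on I f := exists al be : R, forall x, I x -> f x = al * x + be.

Lemma affine_on_sum I n (F : 'I_n -> R -> R) :
  (forall i, affine_on I (F i)) -> affine_on I (fun x => \sum_(i < n) F i x).
Proof.
elim: n F => [|n IH] F hF; first by exists 0, 0 => x _; rewrite big_ord0; ring.
have [al [be h1]] := IH (fun i => F (widen_ord (leqnSn n) i)) (fun i => hF _).
have [al' [be' h2]] := hF ord_max.
by exists (al + al'), (be + be') => x Ix; rewrite big_ord_recr /= h1 // h2 //; ring.
Qed.

Lemma affine_sign_stable {I A B x1 x2} : convex_pred I ->
    (forall x, I x -> A * x + B != 0) ->
  I x1 -> I x2 -> 0 < A * x1 + B -> 0 < A * x2 + B.
Proof.
move=> cI hnz I1 I2 g1p; rewrite ltNge; apply/negP => g2n.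
have {g2n} g2n : A * x2 + B < 0 by rewrite lt_neqAle hnz.
set g1 := A * x1 + B in g1p; set g2 := A * x2 + B in g2n.
set t := g1 / (g1 - g2).
have t0 : 0 <= t by rewrite divr_ge0 //; lra.
have t1 : t <= 1 by rewrite ler_pdivrMr; lra.
have tE : t * (g1 - g2) = g1 by rewrite mulfVK //; apply: lt0r_neq0; lra.
set z := x1 + t * (x2 - x1).
have Iz : I z.
  have [x12 | x21] := lerP x1 x2.
    by apply: (cI x1 x2) => //; rewrite /z; nra.
  by apply: (cI x2 x1) => //; rewrite /z; nra.
have gz : A * z + B = g1 - t * (g1 - g2) by rewrite /z /g1 /g2; ring.
by move: (hnz z Iz); rewrite gz tE subrr eqxx.
Qed.

Section AffineState.
Context {I : R -> Prop}.
Hypotheses (cI : convex_pred I) (I_ge1 : forall x, I x -> 1 <= x).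

Definition unimodular_affine_on (f : R -> R * R) :=
  exists a1 b1 a2 b2 : R, (a1 * b2 - a2 * b1) ^+ 2 = 1 /\
    forall x, I x -> f x = (a1 * x + b1, a2 * x + b2).

Lemma wstep_unimodular_affine (f : R -> R * R) :
  (forall x, I x -> (f x).1 != 2 * (f x).2) ->
  unimodular_affine_on f -> unimodular_affine_on (fun x => wstep (f x)).
Proof.
move=> hnz [a1 [b1 [a2 [b2 [hdet hf]]]]].
have hg x : I x -> (a1 - 2 * a2) * x + (b1 - 2 * b2) != 0.
  by move=> Ix; move: (hnz x Ix); rewrite hf //=; apply: contra => /eqP h;
    apply/eqP; lra.
have [[x0 [Ix0 gp]] | nop] :=
  classic (exists x0, I x0 /\ 0 < (a1 - 2 * a2) * x0 + (b1 - 2 * b2)).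
  exists (a1 - a2), (b1 - b2), a2, b2; split; first by rewrite -hdet; ring.
  move=> x Ix; have := affine_sign_stable cI hg Ix0 Ix gp.
  by rewrite hf //= => gx; rewrite ifT; [congr (_, _); ring | lra].
exists a2, b2, (a1 - a2), (b1 - b2); split; first by rewrite -hdet; ring.
move=> x Ix; have gx : (a1 - 2 * a2) * x + (b1 - 2 * b2) < 0.
  by rewrite lt_neqAle hg //= leNgt; apply/negP => gp; apply: nop; exists x.
by rewrite hf //= ifF; [congr (_, _); ring | apply/negbTE; rewrite -ltNge; lra].
Qed.

Lemma wstate_unimodular_affine {k} :
  (forall x, I x -> 0 < w k.+1 x) -> unimodular_affine_on (wstate k).
Proof.
elim: k => [_ | k IH wpos].
  by exists 1, 0, 0, 1; split => [|x _]; [ring | congr (_, _); ring].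
have wpos' x : I x -> 0 < w k.+1 x.
  by move=> Ix; apply: (w_gt0_leq (I_ge1 x Ix) (leqnSn _) (wpos x Ix)).
apply: (@wstep_unimodular_affine (wstate k)) (IH wpos') => x Ix.
have s0 : 0 < (wstate k x).2.
  by rewrite -wE; apply: (w_gt0_leq (I_ge1 x Ix) (leqnSn _) (wpos' x Ix)).
have s1 : 0 < (wstep (wstate k x)).2 by rewrite -wstateS -wE; apply: wpos'.
move: s0 s1 (wpos x Ix); rewrite wE !wstateS; case: (wstate k x) => L s s0 s1.
by apply: contraTneq => /(wstep2_eq0 s0 s1).2 ->; rewrite ltxx.
Qed.

Lemma w_affine_on {n i} :
  (forall x, I x -> 0 < w n x) -> (i < n)%N -> affine_on I (w i).
Proof.
move=> wpos lt_in.
have [a1 [b1 [a2 [b2 [_ hst]]]]] := @wstate_unimodular_affine i (fun x Ix =>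
  w_gt0_leq (I_ge1 x Ix) lt_in (wpos x Ix)).
by exists a2, b2 => x Ix; rewrite wE hst.
Qed.

Lemma w_eq0_unique {n a0 a1} : (forall x, I x -> 0 < w n x) ->
  I a0 -> I a1 -> w n.+1 a0 = 0 -> w n.+1 a1 = 0 -> a0 = a1.
Proof.
case: n => [_ Ia0 Ia1 wa0 wa1 | k wpos Ia0 Ia1 wa0 wa1].
  by rewrite (w1_eq0 (I_ge1 _ Ia0) wa0) (w1_eq0 (I_ge1 _ Ia1) wa1).
have [p1 [q1 [p2 [q2 [hdet hst]]]]] := wstate_unimodular_affine wpos.
have root x : I x -> w k.+2 x = 0 -> (p1 - 2 * p2) * x + (q1 - 2 * q2) = 0.
  move=> Ix wx; have s0 : 0 < (wstate k x).2.
    by rewrite -wE; apply: (w_gt0_leq (I_ge1 x Ix) (leqnSn _) (wpos x Ix)).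
  have s1 : 0 < (wstep (wstate k x)).2 by rewrite -wstateS -wE; apply: wpos.
  move: s0 s1 wx; rewrite wE !wstateS hst //= => s0 s1 /(wstep2_eq0 s0 s1) hL.
  by transitivity (p1 * x + q1 - 2 * (p2 * x + q2)); [ring | rewrite hL subrr].
have ga0 := root a0 Ia0 wa0; have ga1 := root a1 Ia1 wa1.
apply/eqP; apply: contraT => ne.
have p0 : p1 - 2 * p2 = 0.
  have : (p1 - 2 * p2) * (a0 - a1) = 0 by rewrite mulrBr; lra.
  by move/eqP; rewrite mulf_eq0 [a0 - a1 == 0]subr_eq0 (negbTE ne) orbF => /eqP.
have q0 : q1 - 2 * q2 = 0 by move: ga0; rewrite p0 mul0r add0r.
have : p1 * q2 - p2 * q1 = (p1 - 2 * p2) * q2 - p2 * (q1 - 2 * q2) by ring.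
rewrite p0 q0 mul0r mulr0 subrr => det0.
by move: hdet; rewrite det0 expr0n /=; lra.
Qed.
End AffineState.

End AffinePieces.

Section MaximalIntervals.
Context {R : realType}.
Implicit Types (P I : R -> Prop) (f : R -> R).

Definition lipschitz_ge1 (K : R) f :=
  forall a b, 1 <= a -> 1 <= b -> `|f a - f b| <= K * `|a - b|.

Definition adherent I (c : R) :=
  forall eps, 0 < eps -> exists2 t, I t & `|t - c| < eps.

Lemma sqrt_half_lipschitz : lipschitz_ge1 1 (fun a => Num.sqrt (a / 2)).
Proof.
move=> a b a1 b1; rewrite mul1r.
set p := Num.sqrt (a / 2); set q := Num.sqrt (b / 2).
have p2 : p ^+ 2 = a / 2 by rewrite sqr_sqrtr //; lra.
have q2 : q ^+ 2 = b / 2 by rewrite sqr_sqrtr //; lra.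
have p0 : 0 <= p := sqrtr_ge0 _; have q0 : 0 <= q := sqrtr_ge0 _.
have ph : 1 / 2 <= p by rewrite leNgt; apply/negP => h; nra.
have qh : 1 / 2 <= q by rewrite leNgt; apply/negP => h; nra.
have -> : a - b = (2 * (p + q)) * (p - q) by nra.
rewrite normrM [`|2 * _|]ger0_norm; last lra.
rewrite -[leLHS]mul1r ler_wpM2r //; lra.
Qed.

Lemma affine_le_sqrt_half_between {x t y al be : R} : 0 <= x -> x < t -> t < y ->
  al * x + be <= Num.sqrt (x / 2) -> al * y + be <= Num.sqrt (y / 2) ->
  al * t + be <= Num.sqrt (t / 2).
Proof.
move=> x0 xt ty hx hy.
set p := Num.sqrt (x / 2) in hx; set q := Num.sqrt (y / 2) in hy.
set r := Num.sqrt (t / 2).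
have p2 : p ^+ 2 = x / 2 by rewrite sqr_sqrtr //; lra.
have q2 : q ^+ 2 = y / 2 by rewrite sqr_sqrtr //; lra.
have r2 : r ^+ 2 = t / 2 by rewrite sqr_sqrtr //; lra.
have p0 : 0 <= p := sqrtr_ge0 _; have q0 : 0 <= q := sqrtr_ge0 _.
have r0 : 0 <= r := sqrtr_ge0 _.
(* [U / (y - x)] is the chord of [sqrt (. / 2)] at [t]; concavity puts it below [r]. *)
set U := (y - t) * p + (t - x) * q.
have chord : (y - x) * (al * t + be) <= U.
  have -> : (y - x) * (al * t + be) = (y - t) * (al * x + be) + (t - x) * (al * y + be)
    by ring.
  by apply: lerD; apply: ler_wpM2l => //; lra.
have U0 : 0 <= U by rewrite /U; nra.
have UV : U ^+ 2 <= ((y - x) * r) ^+ 2.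
  have -> : ((y - x) * r) ^+ 2 = (y - x) * ((y - t) * p ^+ 2 + (t - x) * q ^+ 2).
    by rewrite exprMn r2 p2 q2; field.
  have : 0 <= (y - t) * (t - x) * (p - q) ^+ 2.
    by apply: mulr_ge0; [apply: mulr_ge0; lra | exact: sqr_ge0].
  rewrite /U; nra.
have : U <= (y - x) * r by rewrite -ler_sqr // ?nnegrE //; apply: mulr_ge0 => //; lra.
by move: chord => /le_trans /[apply]; rewrite ler_pM2l //; lra.
Qed.

Lemma maximal_good_interval_ball {P I c del} :
  maximal_good_interval P I -> 1 <= c -> 0 < del ->
  (forall z, 1 <= z -> `|z - c| < del -> P z) ->
  (exists2 t, I t & `|t - c| < del) -> I c.
Proof.
move=> [[[x0 Ix0] IP cI op] maxI] c1 del0 Pball [t It tc].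
pose J z := I z \/ 1 <= z /\ `|z - c| < del.
have ballJ u v z : 1 <= u -> `|u - c| < del -> `|v - c| < del ->
    u <= z -> z <= v -> J z.
  move=> u1 uc vc uz zv; right; split; first lra.
  by move: uc vc; rewrite !ltr_norml => /andP[? ?] /andP[? ?]; apply/andP; split; lra.
have tJ := IP t It.
suff gJ : good_interval P J by apply: (maxI J gJ (fun z Iz => or_introl Iz)); right;
  rewrite subrr normr0.
split.
- by exists x0; left.
- by move=> z [/IP // | [z1 zc]]; split => //; apply: Pball.
- move=> x y z [Ix | [x1 xc]] [Iy | [y1 yc]] xz zy.
  + by left; apply: (cI x y).
  + have [tz | zt] := lerP t z; first by apply: (ballJ t y) => //; case: tJ.
    by left; apply: (cI x t) => //; apply: ltW.
  + have [tz | zt] := lerP t z; first by left; apply: (cI t y).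
    by apply: (ballJ x t) => //; apply: ltW.
  + exact: (ballJ x y).
- move=> x [Ix | [x1 xc]].
    by have [eps eps0 epsI] := op x Ix; exists eps => // y y1 yx; left; apply: epsI.
  exists (del - `|x - c|); first lra.
  by move=> y y1 yx; right; split => //; have := ler_distD x y c; lra.
Qed.

Lemma maximal_good_interval_boundary {f g Kf Kg I c} :
  0 <= Kf -> 0 <= Kg -> lipschitz_ge1 Kf f -> lipschitz_ge1 Kg g ->
  maximal_good_interval (fun a => g a < f a) I ->
  1 <= c -> ~ I c -> adherent I c -> f c <= g c.
Proof.
move=> Kf0 Kg0 lf lg mI c1 nIc adc; rewrite leNgt; apply/negP => gf; apply: nIc.
set del := (f c - g c) / (Kf + Kg + 1).
have del0 : 0 < del by apply: divr_gt0; lra.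
have delE : (Kf + Kg + 1) * del = f c - g c by rewrite mulrC divfK // gt_eqF //; lra.
apply: (maximal_good_interval_ball mI c1 del0 _ (adc del del0)) => z z1 zc.
have : (Kf + Kg) * `|z - c| <= (Kf + Kg) * del by apply: ler_wpM2l; [lra | exact: ltW].
have := lf z c z1 c1; have := lg z c z1 c1.
rewrite !ler_norml => /andP[_ ?] /andP[? _]; lra.
Qed.

Lemma lipschitz_affine_adherent {f K I al be c} : 0 <= K -> lipschitz_ge1 K f ->
  (forall x, I x -> 1 <= x) -> (forall x, I x -> f x = al * x + be) ->
  1 <= c -> adherent I c -> f c = al * c + be.
Proof.
move=> K0 lf I_ge1 fI c1 adc; apply/eqP; rewrite -subr_eq0 -normr_le0.
apply/ler_addgt0Pr => e e0; rewrite add0r.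
set Q := K + `|al| + 1; have Q0 : 0 < Q by rewrite /Q; have := normr_ge0 al; lra.
have [t It tc] := adc (e / Q) (divr_gt0 e0 Q0).
have Qt : Q * `|t - c| < e by rewrite -ltr_pdivlMl // mulrC.
have lt := lf c t c1 (I_ge1 t It); rewrite [`|c - t|]distrC in lt.
have -> : f c - (al * c + be) = (f c - f t) + al * (t - c) by rewrite (fI t It); ring.
apply: (le_trans (ler_normD _ _)); rewrite normrM; move: Qt; rewrite /Q !mulrDl mul1r.
have := normr_ge0 (t - c); lra.
Qed.

Lemma good_interval_ends {P I Bd} : good_interval P I ->
  (forall x, I x -> x <= Bd) -> ~ I 1 ->
  exists x y, [/\ 1 <= x, forall t, I t -> x < t < y, adherent I x & adherent I y].
Proof.
move=> [[x0 Ix0] IP _ op] IBd nI1.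
have I_ge1 t : I t -> 1 <= t by case/IP.
have supI : has_sup I by split; [exists x0 | exists Bd => z /IBd].
have infI : has_inf I by split; [exists x0 | exists 1 => z /I_ge1].
have ub t : I t -> t <= sup I by move=> It; apply: sup_upper_bound.
have lb t : I t -> inf I <= t by move=> It; apply: ge_inf infI.2 _ It.
have x1 : 1 <= inf I by apply: lb_le_inf => [|z /I_ge1]; first by exists x0.
have nIy : ~ I (sup I).
  move=> Iy; have [eps eps0 epsI] := op _ Iy.
  have : I (sup I + eps / 2).
    by apply: epsI; [have := I_ge1 _ Iy; lra | rewrite addrC addKr ger0_norm; lra].
  by move/ub; lra.
have nIx : ~ I (inf I).
  move=> Ix; have [eps eps0 epsI] := op _ Ix.
  have {}x1 : 1 < inf I.
    by rewrite lt_neqAle x1 andbT; apply/eqP => E; apply: nI1; rewrite E.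
  set del := Num.min eps (inf I - 1).
  have del0 : 0 < del by rewrite /del lt_min; apply/andP; split; lra.
  have delx : del <= inf I - 1 by rewrite /del ge_min lexx orbT.
  have dele : del <= eps by rewrite /del ge_min lexx.
  have : I (inf I - del / 2).
    by apply: epsI; [lra | rewrite addrC addKr normrN ger0_norm; lra].
  by move/lb; lra.
exists (inf I), (sup I); split => //.
- move=> t It; rewrite !lt_neqAle lb // ub // !andbT.
  by apply/andP; split; apply/eqP => E; [apply: nIx; rewrite E | apply: nIy; rewrite -E].
- move=> eps eps0; have [t It tx] := inf_adherent eps0 infI.
  by exists t => //; have h := lb t It; rewrite ger0_norm; lra.
- move=> eps eps0; have [t It tx] := sup_adherent eps0 supI.
  by exists t => //; have h := ub t It; rewrite ler0_norm; lra.
Qed.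

(* At both ends of [I] maximality forces [f <= sqrt (. / 2)], and a line lying
   below the concave [sqrt (. / 2)] at two points stays below it in between. *)
Lemma maximal_good_interval_not_affine {f K I Bd} : 0 <= K -> lipschitz_ge1 K f ->
  maximal_good_interval (fun a => Num.sqrt (a / 2) < f a) I ->
  (forall x, I x -> x <= Bd) -> ~ I 1 -> ~ affine_on I f.
Proof.
move=> K0 lf mI IBd nI1 [al [be fI]].
have [[[x0 Ix0] IP _ _] _] := mI.
have I_ge1 t : I t -> 1 <= t by case/IP.
have [x [y [x1 xIy adx ady]]] := good_interval_ends mI.1 IBd nI1.
have /andP[xx0 x0y] := xIy x0 Ix0.
have end_le c : 1 <= c -> ~ I c -> adherent I c -> al * c + be <= Num.sqrt (c / 2).
  move=> c1 nIc adc; rewrite -(lipschitz_affine_adherent K0 lf I_ge1 fI c1 adc).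
  exact: (maximal_good_interval_boundary K0 ler01 lf sqrt_half_lipschitz mI).
have nIx : ~ I x by move=> /xIy; rewrite ltxx.
have nIy : ~ I y by move=> /xIy; rewrite ltxx andbF.
have y1 : 1 <= y by lra.
have := affine_le_sqrt_half_between (le_trans ler01 x1) xx0 x0y
  (end_le x x1 nIx adx) (end_le y y1 nIy ady).
by rewrite -(fI x0 Ix0); have := (IP x0 Ix0).2; lra.
Qed.

End MaximalIntervals.

Lemma ge_int_trans : transitive ge_int.
Proof. by move=> x y z yx zy; apply: le_trans zy yx. Qed.

Lemma sorted_nth_gt0 {m : seq int} : sorted ge_int m ->
  forall i, (i < size m)%N -> (0 < nth 0 m i) = (i < lm m)%N.
Proof.
elim: m => [//|x s IH] xs; have {}IH := IH (path_sorted xs).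
have s_le_x := order_path_min ge_int_trans xs.
have [x0 | x0] := lerP x 0; last first.
  by case=> [|i] /=; rewrite /lm /= x0 // add1n ltnS; apply: IH.
have -> : lm (x :: s) = 0%N.
  apply/eqP; rewrite /lm eqn0Ngt -has_count; apply/hasPn => y /=.
  by rewrite inE -leNgt => /predU1P[-> // | /(allP s_le_x) yx]; apply: le_trans yx x0.
case=> [|i] /= ltis; rewrite ltn0; first by rewrite ltNge x0.
by rewrite ltNge (le_trans _ x0) //; apply: (allP s_le_x); apply: mem_nth.
Qed.

Lemma nth_eq0_lm (m : seq int) i : sorted ge_int m -> all (fun x : int => 0 <= x) m ->
  (lm m <= i)%N -> nth 0 m i = 0.
Proof.
move=> ms m0 lmi; have [ltim | ] := ltnP i (size m); last exact: nth_default.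
have := sorted_nth_gt0 ms i ltim; rewrite ltnNge lmi /= => /negbT.
by rewrite lt_def (allP m0 _ (mem_nth 0 ltim)) andbT negbK => /eqP.
Qed.

Section ClassFunction.
Context {R : realType}.

Lemma sum_cross_le {n} (c u : 'I_n -> R) {k} (t s : R) : u k = 0 -> 1 <= c k ->
  2 * t * s * \sum_i c i * u i <=
  t ^+ 2 * (\sum_i c i ^+ 2 - 1) + s ^+ 2 * \sum_i u i ^+ 2.
Proof.
move=> uk ck.
have expand : \sum_i (t * c i - s * u i) ^+ 2 =
    t ^+ 2 * \sum_i c i ^+ 2 - 2 * t * s * \sum_i c i * u i + s ^+ 2 * \sum_i u i ^+ 2.
  rewrite !mulr_sumr -sumrN -!big_split /=.
  by apply: eq_bigr => i _; ring.
have : t ^+ 2 <= \sum_i (t * c i - s * u i) ^+ 2.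
  rewrite (bigD1 k) //= uk mulr0 subr0 -[leLHS]addr0 lerD //; last first.
    by apply: sumr_ge0 => i _; apply: sqr_ge0.
  by rewrite exprMn -[leLHS]mulr1 ler_wpM2l ?sqr_ge0 // -[1](expr1n _ 2) lerXn2r
    ?nnegrE //; lra.
rewrite expand; lra.
Qed.

Variables (d e : int) (m : seq int).
Local Notation D := ((d + e)%:~R : R).
Local Notation c i := ((nth 0 m i)%:~R : R).

Lemma mu_cls_lipschitz :
  lipschitz_ge1 ((\sum_(i < size m) `|c i| * 2 ^+ i) / `|D|) (mu_cls d e m).
Proof.
move=> a b _ _; rewrite /mu_cls -mulrBl normrM normfV mulrAC ler_wpM2r ?invr_ge0 //.
rewrite -sumrB mulr_suml; apply: le_trans (ler_norm_sum _ _ _) _; apply: ler_sum => i _.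
by rewrite -mulrBr normrM -mulrA; apply: ler_wpM2l => //; apply: w_lipschitz.
Qed.

Lemma mu_cls_le (a : R) : 1 <= a -> mu_cls d e m a <= (\sum_(i < size m) `|c i|) / `|D|.
Proof.
move=> a1; apply: le_trans (ler_norm _) _.
rewrite /mu_cls normrM normfV ler_wpM2r ?invr_ge0 //.
apply: le_trans (ler_norm_sum _ _ _) _; apply: ler_sum => i _.
rewrite normrM [`|w _ _|]ger0_norm ?w_ge0 // -[leRHS]mulr1.
by apply: ler_wpM2l => //; apply: w_le1.
Qed.

Hypotheses (d0 : 0 <= d) (e0 : 0 <= e) (sorted_m : sorted ge_int m)
  (sum_m2 : \sum_(x <- m) x ^+ 2 = 2 * d * e + 1).

Lemma mu_cls_le_sqrt_half {a : R} {k} : 1 <= a -> (k < lm m)%N -> w k a = 0 ->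
  mu_cls d e m a <= Num.sqrt (a / 2).
Proof.
move=> a1 klm wk; have ksz : (k < size m)%N := leq_trans klm (count_size _ _).
have ck : 1 <= c k by rewrite ler1z -gtz0_ge1 sorted_nth_gt0.
have d0' : (0 : R) <= d%:~R by rewrite ler0z.
have e0' : (0 : R) <= e%:~R by rewrite ler0z.
have DE : D = d%:~R + e%:~R by rewrite intrD.
have [D0 | Dpos] := eqVneq D 0; first by rewrite /mu_cls D0 invr0 mulr0 sqrtr_ge0.
have {Dpos} D0 : 0 < D by rewrite lt_neqAle eq_sym Dpos DE /=; lra.
set r := Num.sqrt (a / 2).
have r2 : r ^+ 2 = a / 2 by rewrite sqr_sqrtr //; lra.
have r0 : 0 < r by rewrite sqrtr_gt0; lra.
have sum_c2 : \sum_(i < size m) c i ^+ 2 = 2 * d%:~R * e%:~R + 1.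
  have -> : 2 * d%:~R * e%:~R + 1 = ((2 * d * e + 1)%:~R : R).
    by rewrite rmorphD !rmorphM.
  rewrite -sum_m2 (big_nth 0) big_mkord rmorph_sum.
  by apply: eq_bigr => i _; rewrite rmorphXn.
(* Cauchy-Schwarz in homogeneous form, at [t = 2 r] and [s = d + e] *)
have := sum_cross_le (fun i : 'I_(size m) => c i) (fun i => w i a)
  (k := Ordinal ksz) (2 * r) D wk ck.
rewrite /= sum_c2 addrK => cross.
have B_le := sum_w2_le (size m) a a1.
set S := \sum_(i < size m) _ in cross *; set B := \sum_(i < size m) _ in B_le cross.
have DB : D ^+ 2 * B <= D ^+ 2 * (2 * r ^+ 2) by apply: ler_wpM2l; [apply: sqr_ge0 | lra].
have de : r ^+ 2 * (4 * d%:~R * e%:~R) <= r ^+ 2 * D ^+ 2.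
  apply: ler_wpM2l; first exact: sqr_ge0.
  by rewrite DE; have := sqr_ge0 ((d%:~R : R) - e%:~R); nra.
rewrite /mu_cls -/S ler_pdivrMr // -(ler_pM2l (mulr_gt0 r0 D0)); nra.
Qed.

Lemma w_gt0_of_sqrt_half_lt_mu_cls (a : R) : 1 <= a ->
  Num.sqrt (a / 2) < mu_cls d e m a -> forall k, (k < lm m)%N -> 0 < w k a.
Proof.
move=> a1 lt_mu k klm; rewrite lt_neqAle w_ge0 // andbT eq_sym; apply/eqP => wk.
by move: lt_mu; rewrite ltNge (mu_cls_le_sqrt_half a1 klm wk).
Qed.

Hypothesis nonneg_m : all (fun x : int => 0 <= x) m.

Lemma mu_cls_affine_on (I : R -> Prop) : convex_pred I -> (forall x, I x -> 1 <= x) ->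
  (forall x, I x -> 0 < w (lm m) x) -> affine_on I (mu_cls d e m).
Proof.
move=> cI I_ge1 wpos.
have [al [be Saff]] : affine_on I (fun x => \sum_(i < size m) c i * w i x).
  apply: affine_on_sum => i; have [lti | lei] := ltnP i (lm m).
    have [al [be wi]] := w_affine_on cI I_ge1 wpos lti.
    by exists (c i * al), (c i * be) => x Ix; rewrite wi //; ring.
  by exists 0, 0 => x _; rewrite nth_eq0_lm // mul0r; ring.
by exists (al / D), (be / D) => x Ix; rewrite /mu_cls Saff //; ring.
Qed.

End ClassFunction.

Section MaximalInterval.
Context {R : realType} {d e : int} {m : seq int} {I : R -> Prop}.
Hypotheses (d0 : 0 <= d) (e0 : 0 <= e) (sorted_m : sorted ge_int m)
  (nonneg_m : all (fun x : int => 0 <= x) m)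
  (sum_m2 : \sum_(x <- m) x ^+ 2 = 2 * d * e + 1)
  (maxI : maximal_good_interval (fun a : R => Num.sqrt (a / 2) < mu_cls d e m a) I).

Let I_ge1 {x} : I x -> 1 <= x. Proof. by case: maxI => -[_ IP _ _] _ /IP[]. Qed.

Lemma w_gt0_on_maximal x : I x -> forall k, (k < lm m)%N -> 0 < w k x.
Proof.
move=> Ix; have [[_ IP _ _] _] := maxI.
exact: w_gt0_of_sqrt_half_lt_mu_cls d e m d0 e0 sorted_m sum_m2 x (I_ge1 Ix) (IP x Ix).2.
Qed.

Lemma wlen_eq_lm_on_maximal x : I x -> wlen_eq x (lm m) <-> w (lm m) x = 0.
Proof.
move=> Ix; split => [len | wx i]; last first.
  by split; [exact: (w_gt0_lt (I_ge1 Ix) wx i) | apply: w_gt0_on_maximal].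
apply/eqP; rewrite eq_le w_ge0 ?I_ge1 // andbT leNgt; apply/negP => /len.
by rewrite ltnn.
Qed.

Lemma lm_gt0 : (0 < lm m)%N.
Proof.
have [[[x0 Ix0] IP _ _] _] := maxI; move: (IP x0 Ix0).2.
rewrite lt0n; apply: contraTneq => lm0; rewrite -leNgt /mu_cls big1 ?mul0r ?sqrtr_ge0 //.
by move=> i _; rewrite nth_eq0_lm ?lm0 // mul0r.
Qed.

Lemma exists_w_lm_eq0_on_maximal : exists2 a0, I a0 & w (lm m) a0 = 0.
Proof.
apply: NNPP => no_a0; have [[_ IP cI _] _] := maxI.
have wpos x : I x -> 0 < w (lm m) x.
  move=> Ix; rewrite lt_neqAle w_ge0 ?I_ge1 // andbT eq_sym.
  by apply/eqP => wx; apply: no_a0; exists x.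
set C := (\sum_(i < size m) `|(nth 0 m i)%:~R : R|) / `|(d + e)%:~R : R|.
have IBd x : I x -> x <= 2 * C ^+ 2.
  move=> Ix; have lt_C : Num.sqrt (x / 2) < C.
    exact: lt_le_trans (IP x Ix).2 (mu_cls_le d e m x (I_ge1 Ix)).
  have s2 : Num.sqrt (x / 2) ^+ 2 = x / 2 by rewrite sqr_sqrtr //; have := I_ge1 Ix; lra.
  have := sqrtr_ge0 (x / 2); nra.
have nI1 : ~ I 1 by move=> /wpos; rewrite w_at1 ?lm_gt0 // ltxx.
have K0 : 0 <= (\sum_(i < size m) `|(nth 0 m i)%:~R : R| * 2 ^+ i) / `|(d + e)%:~R|.
  apply: divr_ge0 => //; apply: sumr_ge0 => i _.
  by apply: mulr_ge0 => //; apply: exprn_ge0.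
exact: maximal_good_interval_not_affine K0 (mu_cls_lipschitz d e m) maxI IBd nI1
  (mu_cls_affine_on d e m sorted_m nonneg_m I cI (@I_ge1) wpos).
Qed.

End MaximalInterval.

Theorem lemma4p13 (R : realType) (d e : int) (m : seq int) (I : R -> Prop) :
  in_calE d e m ->
  (exists a : R, 1 <= a /\ Num.sqrt (a / 2) < mu_cls d e m a) ->
  maximal_good_interval (fun a : R => Num.sqrt (a / 2) < mu_cls d e m a) I ->
  exists a0 : R,
    [/\ I a0, wlen_eq a0 (lm m),
        (forall a1 : R, I a1 -> wlen_eq a1 (lm m) -> a1 = a0) &
        (forall a : R, I a -> wlen_le a0 a)].
Proof.
(* The existence hypothesis follows from [I] being nonempty, and of membership
   in [in_calE] only the two Diophantine equations are needed. *)
move=> [[-> [-> ->]] | [[d0 e0] [sorted_m nonneg_m] _ sum_m2 _]] _ maxI.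
  have [[[x0 Ix0] IP _ _] _] := maxI; move: (IP x0 Ix0).2.
  by rewrite /mu_cls addr0 invr0 mulr0 ltNge sqrtr_ge0.
have [[_ IP cI _] _] := maxI; have I_ge1 x : I x -> 1 <= x by case/IP.
have wlenE := wlen_eq_lm_on_maximal d0 e0 sorted_m sum_m2 maxI.
have w_gt0 := w_gt0_on_maximal d0 e0 sorted_m sum_m2 maxI.
have [a0 Ia0 wa0] := exists_w_lm_eq0_on_maximal sorted_m nonneg_m maxI.
exists a0; split => // [|a1 Ia1 /(wlenE a1 Ia1) wa1 | a Ia i wi].
- by apply/wlenE.
- move: (lm_gt0 sorted_m nonneg_m maxI) wa0 wa1 w_gt0; case: (lm m) => // n _ wa0 wa1 w_gt0.
  by apply: (w_eq0_unique cI I_ge1 _ Ia1 Ia0 wa1 wa0) => x Ix; apply: w_gt0.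
- exact: w_gt0 a Ia i (w_gt0_lt (I_ge1 a0 Ia0) wa0 i wi).
Qed.
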